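(* Let $X$ be a Hausdorff topological space and $(U_i)_{i\in I}$ a family of open subsets of $X$. Say a family $(W_j)_{j\in J}$ of open subsets of $X$ has property ( * ) if for all $j,k\in J$ with $W_j\cap W_k\neq\emptyset$ there exists $i\in I$ with $W_j\cup W_k\subseteq U_i$. (a) If $X$ is regular, $M$ is a compact subset of $X$ and $(U_i)_{i\in I}$ covers $M$, then there is a cover $(W_j)_{j\in J}$ of $M$ by open subsets of $X$ with property ( * ). (b) If $X$ is paracompact and $(U_i)_{i\in I}$ covers $X$, then there is an open cover $(W_j)_{j\in J}$ of $X$ with property ( * ). (c) If $X$ is paracompact, $M$ is a closed subset of $X$ and $(U_i)_{i\in I}$ covers $M$, then there is a cover $(W_j)_{j\in J}$ of $M$ by open subsets of $X$ with property ( * ). (d) If $M$ is a locally closed subset of $X$ (i.e., each point of $M$ has a neighborhood $U$ in $X$ with $U\cap M$ relatively closed in $U$), every open neighborhood of $M$ in $X$ contains a paracompact open neighborhood of $M$ in $X$, and $(U_i)_{i\in I}$ covers $M$, then there is a cover $(W_j)_{j\in J}$ of $M$ by open subsets of $X$ with property ( * ). *)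

From HB Require Import structures.
From mathcomp Require Import all_boot all_order all_algebra.
From mathcomp Require Import all_classical all_reals all_analysis.
Set Implicit Arguments. Unset Strict Implicit. Unset Printing Implicit Defensive.
Local Open Scope classical_set_scope.

Definition star_property {X : topologicalType} {I J : Type}
  (U : I -> set X) (W : J -> set X) : Prop :=
  forall j k : J, W j `&` W k !=set0 -> exists i : I, W j `|` W k `<=` U i.

(* S is paracompact as a subspace of X (relative topology): every family of
   open subsets of X covering S admits a family of open subsets of X covering S
   whose traces on S refine the given one and are locally finite in S.
   (Hausdorffness of S is inherited from the ambient Hausdorff space X.) *)
Definition paracompact_subset {X : topologicalType} (S : set X) : Prop :=
  forall (I : Type) (U : I -> set X), (forall i, open (U i)) ->
    S `<=` \bigcup_i U i ->
    exists (J : Type) (V : J -> set X),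
      [/\ (forall j, open (V j)),
          S `<=` \bigcup_j V j,
          (forall j, exists i, V j `&` S `<=` U i) &
          (forall x, S x -> exists N, nbhs x N /\
              finite_set [set j | V j `&` S `&` N !=set0])].

Definition paracompact_space (X : topologicalType) : Prop :=
  paracompact_subset [set: X].

Definition locally_closed {X : topologicalType} (M : set X) : Prop :=
  forall x, M x -> exists U : set X, nbhs x U /\
    exists C : set X, closed C /\ U `&` M = U `&` C.

From HB Require Import structures.
From mathcomp Require Import all_boot all_order all_algebra.
From mathcomp Require Import all_classical all_reals all_analysis.
From mathcomp Require Import finmap.

(* All four parts rest on one construction.  Let (G_j) be an open cover of M,
   locally finite at the points of M, with cl(G_j) inside some U_{s(j)}.  For
   x in G_{j0}, shrink to an open W_x inside G_{j0} which meets only finitely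
   many G_j, avoids cl(G_j) when x is not in it, and lies inside U_{s(j)} when
   it is.  If W_x and W_y meet at z, then both meet G_{j0}, so both lie in
   U_{s(j0)}.  In (a) such a family is a finite subcover by sets with small
   closures, which exists by regularity.  In (b)-(d) it is a locally finite
   refinement inside a paracompact open neighbourhood P of M in which M is
   closed; sets with small closures relative to P exist because an open
   paracompact subset of a Hausdorff space is regular. *)

Set Implicit Arguments.
Unset Strict Implicit.
Unset Printing Implicit Defensive.

Local Open Scope classical_set_scope.

Lemma filter_bigcap_finite (T J : Type) (F : set_system T) {FF : Filter F}
    (D : set J) (P : J -> set T) :
  finite_set D -> (forall j, D j -> F (P j)) -> F (\bigcap_(j in D) P j).
Proof.
move=> finD FP.
have memP A : A \in fset_set (P @` D) <-> (P @` D) A.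
  by rewrite in_fset_set ?in_setE //; exact: finite_image.
have : F (\bigcap_(A in [set` fset_set (P @` D)]) id A).
  by apply: filter_bigI => A /memP [j Dj <-]; exact: FP.
by apply: filterS => z Pz j Dj; apply: Pz; apply/memP; exists j.
Qed.

Lemma compact_cover_compact (X : topologicalType) (A : set X) :
  compact A -> cover_compact A.
Proof.
move=> cA; have [[a _]|A0] := pselect (A !=set0).
  (* [compact_cover] is stated for pointed spaces; any point of A will do. *)
  have := @compact_cover (HB.pack X (isPointed.Build X a)).
  by move=> /(congr1 (fun P => P A)) /(eq_ind _ id cA).
by move=> I D f _ _; exists fset0 => // x Ax; case: A0; exists x.
Qed.

Lemma hausdorff_separating_open (X : topologicalType) (x y : X) :
  hausdorff_space X -> y <> x ->
  exists A : set X, [/\ open A, A y & ~ closure A x].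
Proof.
move=> hX yx; have : ~ cluster (nbhs y) x by move/hX.
rewrite clusterE => /existsNP [A /not_implyP [yA nclA]].
exists (interior A); split; first exact: open_interior.
- exact: nbhs_singleton (nbhs_interior yA).
- by move=> /(closureS (@interior_subset _ A)).
Qed.

Lemma open_paracompact_regular (X : topologicalType) (P V : set X) (x : X) :
  hausdorff_space X -> open P -> paracompact_subset P -> open V -> P x -> V x ->
  exists O, [/\ open O, O x, O `<=` P & closure O `&` P `<=` V].
Proof.
move=> hX oP hpara oV Px Vx.
pose K := {A : set X | open A /\ ~ closure A x}.
pose f (o : option K) := if o is Some A then sval A else V.
have of_ o : open (f o) by case: o => [[A []]|].
have Pf : P `<=` \bigcup_o f o.
  move=> y Py; have [Vy|nVy] := pselect (V y); first by exists None.
  have [|A [oA Ay nclA]] := hausdorff_separating_open hX (x := x) (y := y).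
    by move=> yx; apply: nVy; rewrite yx.
  by exists (Some (exist _ A (conj oA nclA))).
have [J [W [oW covW refW locW]]] := hpara _ f of_ Pf.
have [N [Nx finN]] := locW x Px.
pose T := [set j | W j `&` P `&` N !=set0 /\ ~ (W j `&` P `<=` V)].
have nclT j : T j -> ~ closure (W j `&` P) x.
  move=> [_ nWV]; have [[[A [_ nclA]]|] /= WA] := refW j; last by [].
  by move=> /(closureS WA).
exists (interior (N `&` P `&` \bigcap_(j in T) ~` closure (W j `&` P))); split.
- exact: open_interior.
- apply: filterI; first by apply: filterI => //; exact: open_nbhs_nbhs.
  apply: filter_bigcap_finite; first by apply: sub_finite_set finN => j [].
  move=> j Tj; apply: open_nbhs_nbhs; split; last exact: nclT.
  by rewrite openC; exact: closed_closure.
- by move=> z /interior_subset [[]].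
- move=> y [clOy Py]; apply: contrapT => nVy.
  have [j _ Wy] := covW y Py.
  have [z [Oz Wz]] := clOy (W j) (open_nbhs_nbhs (conj (oW j) Wy)).
  have [[Nz Pz] nclz] := interior_subset Oz.
  apply: (nclz j); last exact: subset_closure.
  by split; [exists z | move=> /(_ y (conj Wy Py))].
Qed.

Section StarRefinement.
Variables (X : topologicalType) (I : Type) (U : I -> set X).
Hypothesis oU : forall i, open (U i).

Definition has_star_cover (M : set X) :=
  exists (J : Type) (W : J -> set X),
    (forall j, open (W j)) /\ M `<=` \bigcup_j W j /\ star_property U W.

Lemma has_star_cover_empty (M : set X) : ~ (M !=set0) -> has_star_cover M.
Proof.
move=> M0; exists False, (fun=> set0); do !split => //.
by move=> x Mx; case: M0; exists x.
Qed.

Lemma locally_finite_star_nbhs (P : set X) (J : Type) (G : J -> set X)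
    (s : J -> I) (x : X) (j0 : J) (N : set X) :
  (forall j, open (G j)) -> (forall j, closure (G j) `&` P `<=` U (s j)) ->
  P x -> G j0 x -> nbhs x N -> finite_set [set j | G j `&` N !=set0] ->
  exists W, [/\ open W, W x, W `<=` G j0 &
    forall j, W `&` G j !=set0 -> W `<=` U (s j)].
Proof.
move=> oG GU Px G0x Nx finN.
pose B j := if `[< closure (G j) x >] then U (s j) else ~` closure (G j).
have nbhsB : nbhs x (\bigcap_(j in [set j | G j `&` N !=set0]) B j).
  apply: filter_bigcap_finite => // j _; rewrite /B.
  case: asboolP => clGx; apply: open_nbhs_nbhs; split => //.
  - exact: GU.
  - by rewrite openC; exact: closed_closure.
pose W := N `&` G j0 `&` \bigcap_(j in [set j | G j `&` N !=set0]) B j.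
exists (interior W); split.
- exact: open_interior.
- apply: filterI => //; apply: filterI => //; exact: open_nbhs_nbhs.
- by move=> z /interior_subset [[]].
- move=> j [z [Wz Gz]] w Ww.
  have [[Nz _] Bz] := interior_subset Wz; have [_ Bw] := interior_subset Ww.
  have GNj : G j `&` N !=set0 by exists z.
  move: (Bz j GNj) (Bw j GNj); rewrite /B.
  by case: asboolP => // _ /(_ (subset_closure Gz)).
Qed.

Lemma locally_finite_star_refinement (P M : set X) (J : Type)
    (G : J -> set X) :
  M `<=` P -> (forall j, open (G j)) -> M `<=` \bigcup_j G j ->
  (forall j, exists i, closure (G j) `&` P `<=` U i) ->
  (forall x, M x ->
     exists N, nbhs x N /\ finite_set [set j | G j `&` N !=set0]) ->
  has_star_cover M.
Proof.
move=> MP oG MG /choice [s GU] locG.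
have /choice [W HW] : forall x : {x | M x}, exists W, [/\ open W, W (sval x),
    (exists j, W `<=` G j) & forall j, W `&` G j !=set0 -> W `<=` U (s j)].
  move=> [x Mx] /=; have [N [Nx finN]] := locG x Mx.
  have [j0 _ G0x] := MG x Mx.
  have [W [? ? ? ?]] := locally_finite_star_nbhs oG GU (MP x Mx) G0x Nx finN.
  by exists W; split => //; exists j0.
exists {x | M x}, W; split; first by move=> x; case: (HW x).
split.
  by move=> x Mx; exists (exist _ x Mx) => //; case: (HW (exist _ x Mx)).
move=> x y [z [Wxz Wyz]].
have [_ Wxx [j WG] WxU] := HW x; have [_ _ _ WyU] := HW y.
exists (s j) => w [Wxw|Wyw].
- by apply: WxU Wxw; exists (sval x); split => //; exact: WG.
- by apply: WyU Wyw; exists z; split => //; exact: WG.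
Qed.

Lemma compact_star_refinement (M : set X) :
  regular_space X -> compact M -> M `<=` \bigcup_i U i -> has_star_cover M.
Proof.
move=> hreg /compact_cover_compact cM MU.
pose D := [set B : set X | open B /\ exists i, closure B `<=` U i].
have MD : M `<=` cover D id.
  move=> x Mx; have [i _ Ux] := MU x Mx.
  have [B nB clB] := hreg x (U i) (open_nbhs_nbhs (conj (oU i) Ux)).
  exists (interior B); last exact: nbhs_singleton (nbhs_interior nB).
  split; first exact: open_interior.
  by exists i; apply: subset_trans clB; apply: closureS; exact: interior_subset.
have [D' sD' MD'] := cM (set X) D id (fun B DB => proj1 DB) MD.
have D'D (B : D') : D (fsval B) by have := sD' _ (fsvalP B); rewrite in_setE.
apply: (@locally_finite_star_refinement setT M D' (fun B => fsval B)) => //.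
- by move=> B; case: (D'D B).
- by move=> x /MD' [B D'B Bx]; exists (FSetSub D'B).
- by move=> B; have [_ [i clU]] := D'D B; exists i => z [/clU].
- by move=> x _; exists setT; split; [exact: filterT | exact: finite_finset].
Qed.

Lemma paracompact_star_refinement (P M : set X) :
  hausdorff_space X -> open P -> paracompact_subset P ->
  M `<=` P -> P `&` closure M `<=` M -> M `<=` \bigcup_i U i ->
  has_star_cover M.
Proof.
move=> hX oP hpara MP PclM MU.
have [[m Mm]|M0] := pselect (M !=set0); last exact: has_star_cover_empty.
have [i0 _ _] := MU m Mm.
have /choice [iU HiU] : forall y : {y | M y}, exists i, U i (sval y).
  by move=> [y My]; have [i _ Uy] := MU y My; exists i.
have /choice [Q HQ] : forall y : {y | M y}, exists Q,
    [/\ open Q, Q (sval y), Q `<=` P & closure Q `&` P `<=` U (iU y)].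
  move=> y; have Py := MP _ (svalP y).
  exact: open_paracompact_regular hX oP hpara (oU _) Py (HiU y).
pose f (o : option {y | M y}) :=
  if o is Some y then Q y else P `&` ~` closure M.
have of_ o : open (f o).
  case: o => [y|]; first by case: (HQ y).
  by apply: openI => //; rewrite openC; exact: closed_closure.
have Pf : P `<=` \bigcup_o f o.
  move=> y Py; have [My|nMy] := pselect (M y).
    by exists (Some (exist _ y My)) => //=; case: (HQ (exist _ y My)).
  by exists None => //; split => // clMy; apply: nMy; exact: PclM.
have [J [V [oV covV refV locV]]] := hpara _ f of_ Pf.
have [k {}refV] := choice refV.
pose G j := if k j is Some y then V j `&` Q y else set0.
apply: (@locally_finite_star_refinement P M J G) => //.
- move=> j; rewrite /G; case: (k j) => [y|]; last exact: open0.
  by apply: openI => //; case: (HQ y).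
- move=> x Mx; have [j _ Vx] := covV x (MP x Mx).
  exists j => //; move: (refV j x (conj Vx (MP x Mx))); rewrite /G /f.
  by case: (k j) => [y Qy|[_]] //; case; exact: subset_closure.
- move=> j; rewrite /G; case: (k j) => [y|]; last first.
    by exists i0; rewrite closure0 => z [].
  have [_ _ _ clOU] := HQ y; exists (iU y) => z [clz Pz].
  by apply: clOU; split => //; apply: closureS clz => w [].
- move=> x Mx; have [N [Nx finN]] := locV x (MP x Mx).
  exists N; split => //; apply: sub_finite_set finN => j [z [Gz Nz]].
  exists z; split => //; move: Gz; rewrite /G.
  case: (k j) => [y [Vz Qz]|//]; split => //.
  by have [_ _ QP _] := HQ y; exact: QP.
Qed.

End StarRefinement.

Lemma locally_closed_open_nbhs (X : topologicalType) (M : set X) :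
  locally_closed M -> exists V, [/\ open V, M `<=` V & V `&` closure M `<=` M].
Proof.
move=> lcM.
pose V := \bigcup_(W in [set W | exists C, closed C /\ W `&` M = W `&` C])
  interior W.
exists V; split.
- by apply: bigcup_open => W _; exact: open_interior.
- move=> x Mx; have [W [Wx [C [cC WMC]]]] := lcM x Mx.
  by exists W => //; exists C.
- move=> y [[W [C [cC WMC]] Wy] clMy].
  suff : (W `&` C) y by rewrite -WMC => -[].
  split; first exact: interior_subset.
  rewrite (closure_id C).1 // => B By.
  have [z [Mz [Wz Bz]]] := clMy _ (filterI Wy By).
  suff : (W `&` C) z by case=> _ Cz; exists z.
  by rewrite -WMC; split => //; exact: interior_subset.
Qed.

Theorem lemma2p1 (X : topologicalType) (I : Type) (U : I -> set X) :
  hausdorff_space X -> (forall i, open (U i)) ->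
  (* (a) *)
  (regular_space X -> forall M : set X, compact M -> M `<=` \bigcup_i U i ->
     exists (J : Type) (W : J -> set X),
       (forall j, open (W j)) /\ M `<=` \bigcup_j W j /\ star_property U W) /\
  (* (b) *)
  (paracompact_space X -> [set: X] `<=` \bigcup_i U i ->
     exists (J : Type) (W : J -> set X),
       (forall j, open (W j)) /\ [set: X] `<=` \bigcup_j W j /\ star_property U W) /\
  (* (c) *)
  (paracompact_space X -> forall M : set X, closed M -> M `<=` \bigcup_i U i ->
     exists (J : Type) (W : J -> set X),
       (forall j, open (W j)) /\ M `<=` \bigcup_j W j /\ star_property U W) /\
  (* (d) *)
  (forall M : set X, locally_closed M ->
     (forall V : set X, open V -> M `<=` V ->
        exists P : set X, [/\ open P, M `<=` P, P `<=` V & paracompact_subset P]) ->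
     M `<=` \bigcup_i U i ->
     exists (J : Type) (W : J -> set X),
       (forall j, open (W j)) /\ M `<=` \bigcup_j W j /\ star_property U W).
Proof.
move=> hX oU.
have closed_case : paracompact_space X -> forall M, closed M ->
    M `<=` \bigcup_i U i -> has_star_cover U M.
  move=> hp M cM; apply: paracompact_star_refinement hX openT hp _ _ => //.
  by move=> y [_]; rewrite -(closure_id M).1.
split; first by move=> hreg M; exact: (compact_star_refinement oU).
split; first by move=> hp; exact: closed_case hp _ closedT.
split; first exact: closed_case.
move=> M /locally_closed_open_nbhs [V [oV MV VM]].
move=> /(_ V oV MV) [P [oP MP PV pP]].
apply: (paracompact_star_refinement oU hX oP pP MP) => y [Py clMy].
exact: VM (conj (PV y Py) clMy).
Qed.
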